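(* Let $V_-=\{(u,v)\in\mathbb R_+^2:v\le 2pu/\beta\}$ and suppose $X:[0,T]\to\mathbb R^2$ is $C^1$, satisfies Condition I, and $X(0)\in V_-^o$ (the interior). Let $A_L,A_U$ start from $X(0)$. Then: (1) $X(t)\ge A_L(t)$ componentwise for every $t\le\tau^L_{V_-^c}\wedge\tau_{V_-^c}$, and $X(t)\le A_U(t)$ componentwise for every $t\le\tau^U_{V_-^c}\wedge\tau_{V_-^c}$; (2) if $\tau^\square_B$ denotes the hitting time of $B$ by the curve $(A_L^1(t),A_U^2(t))$, then $A_L(t)\le X(t)\le A_U(t)$ componentwise for every $t\le\tau^\square_{V_-^c}$. In particular, if $\tau^\square_{V_-^c}=\infty$ then $A_L(t)\le X(t)\le A_U(t)$ for all $t\in[0,T]$.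
   Context: Fix an integer $p\ge3$, $\beta>0$, $\Lambda_p>0$. $\mathcal F_1(u,v)=-pu+\beta v$, $\mathcal F_2^L(u,v)=2p(p-1)-2(p-1)v+2pu(pu-\beta v)-2\beta\Lambda_pv$, $\mathcal F_2^U$ the same with $+2\beta\Lambda_pv$. $A_L$ (resp. $A_U$) solves $\dot A=(\mathcal F_1,\mathcal F_2^L)(A)$ (resp. $(\mathcal F_1,\mathcal F_2^U)(A)$). Hitting times: $\tau_B=\inf\{t\ge0:X(t)\in B\}$, $\tau^L_B$, $\tau^U_B$ the analogues for $A_L,A_U$. Condition I: $\dot X_1=\mathcal F_1(X)$ and $\mathcal F_2^L(X)\le\dot X_2\le\mathcal F_2^U(X)$ on $[0,T]$. *)

From Stdlib Require Import Reals Lra Lia.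
Open Scope R_scope.

Definition F1 (p : nat) (beta u v : R) : R := - INR p * u + beta * v.

Definition F2L (p : nat) (beta Lam u v : R) : R :=
  2 * INR p * (INR p - 1) - 2 * (INR p - 1) * v
  + 2 * INR p * u * (INR p * u - beta * v) - 2 * beta * Lam * v.

Definition F2U (p : nat) (beta Lam u v : R) : R :=
  2 * INR p * (INR p - 1) - 2 * (INR p - 1) * v
  + 2 * INR p * u * (INR p * u - beta * v) + 2 * beta * Lam * v.

Definition Vminus (p : nat) (beta u v : R) : Prop :=
  0 <= u /\ 0 <= v /\ v <= 2 * INR p * u / beta.

Definition Vminus_int (p : nat) (beta u v : R) : Prop :=
  0 < u /\ 0 < v /\ v < 2 * INR p * u / beta.

Definition Vminus_c (p : nat) (beta u v : R) : Prop := ~ Vminus p beta u v.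

(* [le_hit Y1 Y2 D B t] means  t <= tau_B  where
   tau_B = inf { s in [0,D] : (Y1 s, Y2 s) \in B }  (inf of the empty set = +oo),
   the hitting time of B by the curve s |-> (Y1 s, Y2 s) defined on [0,D].
   (t <= inf S  iff  every element of S is >= t.) *)
Definition le_hit (Y1 Y2 : R -> R) (D : R) (B : R -> R -> Prop) (t : R) : Prop :=
  forall s, 0 <= s <= D -> B (Y1 s) (Y2 s) -> t <= s.

(* The field (F1, F2) is cooperative (dF1/dv = beta > 0, dF2/du = 2p(2pu - beta v) >= 0)
   on the half-plane 2pu >= beta v, which contains V_-.  So as long as the lower curve (for
   the sandwich: the corner curve (A_L^1, A_U^2)) has not left V_-, the componentwise
   differences between a subsolution and a supersolution satisfy a Kamke-type linear
   differential inequality at their smallest negative component, and a minimum principle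
   for the exponentially weighted differences shows that they never become negative. *)

From Stdlib Require Import Reals Lra Lia Classical.
Open Scope R_scope.

Lemma derivable_pt_lim_continuity_pt f x l :
  derivable_pt_lim f x l -> continuity_pt f x.
Proof. intro Hd. apply derivable_continuous_pt. exact (exist _ l Hd). Qed.

Lemma continuity_pt_ge0_left g a t :
  a < t -> continuity_pt g t -> (forall s, a <= s < t -> 0 <= g s) -> 0 <= g t.
Proof.
  intros Hat Hc Hg. apply Rnot_lt_le. intro Hneg.
  destruct (Hc (- g t)) as [d [Hd Hnear]]; [lra |].
  assert (Hs1 := Rmax_l (t - d / 2) ((a + t) / 2)).
  assert (Hs2 := Rmax_r (t - d / 2) ((a + t) / 2)).
  set (s := Rmax (t - d / 2) ((a + t) / 2)) in *.
  assert (Hst : s < t) by (apply Rmax_lub_lt; lra).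
  assert (Hdist : Rabs (g s - g t) < - g t).
  { apply Hnear. split.
    - split; [exact I | lra].
    - simpl. unfold R_dist. rewrite Rabs_left; lra. }
  apply Rabs_def2 in Hdist. specialize (Hg s ltac:(lra)). lra.
Qed.

Lemma derivable_pt_lim_left_min f a x l :
  a < x -> derivable_pt_lim f x l -> (forall c, a <= c <= x -> f x <= f c) -> l <= 0.
Proof.
  intros Hax Hd Hmin. apply Rnot_lt_le. intro Hl.
  destruct (Hd l Hl) as [d Hnear].
  set (h := - Rmin (d / 2) (x - a)).
  assert (Hd0 := cond_pos d).
  assert (H1 := Rmin_l (d / 2) (x - a)). assert (H2 := Rmin_r (d / 2) (x - a)).
  assert (Hpos : 0 < Rmin (d / 2) (x - a)) by (apply Rmin_pos; lra).
  assert (Hh : h < 0) by (unfold h; lra).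
  specialize (Hnear h (Rlt_not_eq _ _ Hh) ltac:(rewrite Rabs_left; unfold h; lra)).
  specialize (Hmin (x + h) ltac:(unfold h; lra)).
  apply Rabs_def2 in Hnear.
  assert (Hq : 0 < (f (x + h) - f x) / h) by lra.
  assert (Hprod := Rmult_lt_compat_r (- h) _ _ ltac:(lra) Hq).
  replace ((f (x + h) - f x) / h * - h) with (f x - f (x + h)) in Hprod by (field; lra).
  lra.
Qed.

Lemma derivable_pt_lim_exp_weight L y x d :
  derivable_pt_lim y x d ->
  derivable_pt_lim (fun s => exp (- L * s) * y s) x (exp (- L * x) * (d - L * y x)).
Proof.
  intro Hy.
  assert (Hlin : derivable_pt_lim (fun s => - L * s) x (- L)).
  { assert (H := derivable_pt_lim_scal id (- L) x 1 (derivable_pt_lim_id x)).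
    rewrite Rmult_1_r in H. exact H. }
  assert (Hexp := derivable_pt_lim_comp _ exp x _ _ Hlin (derivable_pt_lim_exp _)).
  assert (Hprod := derivable_pt_lim_mult _ _ x _ _ Hexp Hy).
  replace (exp (- L * x) * (d - L * y x))
    with (exp (- L * x) * - L * y x + comp exp (fun s => - L * s) x * d)
    by (unfold comp; ring).
  exact Hprod.
Qed.

Lemma family_attains_min (n : nat) (a b : R) (w : nat -> R -> R) :
  (0 < n)%nat -> a <= b ->
  (forall i c, (i < n)%nat -> a <= c <= b -> continuity_pt (w i) c) ->
  exists i r, (i < n)%nat /\ a <= r <= b /\
    forall j c, (j < n)%nat -> a <= c <= b -> w i r <= w j c.
Proof.
  intros Hn Hab Hw. induction n as [|n IH]; [lia |].
  destruct (continuity_ab_min (w n) a b Hab (fun c Hc => Hw n c (Nat.lt_succ_diag_r n) Hc))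
    as [r [Hr Hrab]].
  destruct (Nat.eq_dec n 0) as [-> | Hn0].
  { exists 0%nat, r. repeat split; try lra; try lia.
    intros j c Hj Hc. replace j with 0%nat by lia. auto. }
  destruct IH as [i [r' [Hi [Hr'ab Hr']]]]; [lia | intros; apply Hw; auto; lia |].
  destruct (Rle_lt_dec (w i r') (w n r)) as [Hle | Hlt].
  - exists i, r'. repeat split; try lra; try lia.
    intros j c Hj Hc. destruct (Nat.eq_dec j n) as [-> | Hjn].
    + specialize (Hr c Hc). lra.
    + apply Hr'; auto; lia.
  - exists n, r. repeat split; try lra; try lia.
    intros j c Hj Hc. destruct (Nat.eq_dec j n) as [-> | Hjn]; [auto |].
    specialize (Hr' j c ltac:(lia) Hc). lra.
Qed.

(* Take the minimum over i and s of e^{-Ls} y_i(s) with L > sup g.  If it were negative,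
   it would be attained at some r > 0 where y_i is the smallest component; there the
   left derivative e^{-Lr} (y_i' - L y_i) is <= 0, whereas y_i' >= g y_i > L y_i. *)
Lemma comparison_principle (n : nat) (t : R) (y g : nat -> R -> R) :
  (forall i s, (i < n)%nat -> 0 <= s <= t -> continuity_pt (g i) s) ->
  (forall i, (i < n)%nat -> 0 <= y i 0) ->
  (forall i s, (i < n)%nat -> 0 <= s <= t -> exists d, derivable_pt_lim (y i) s d /\
     (y i s < 0 -> (forall j, (j < n)%nat -> y i s <= y j s) -> g i s * y i s <= d)) ->
  forall i s, (i < n)%nat -> 0 <= s <= t -> 0 <= y i s.
Proof.
  intros Hg Hy0 Hy i s Hi Hs.
  destruct (family_attains_min n 0 t (fun i s => - g i s) ltac:(lia) ltac:(lra))
    as [k [rk [Hk [Hrk Hgmax]]]].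
  { intros j c Hj Hc. apply continuity_pt_opp. auto. }
  set (L := g k rk + 1).
  assert (Hcont : forall j c, (j < n)%nat -> 0 <= c <= s ->
            continuity_pt (fun c => exp (- L * c) * y j c) c).
  { intros j c Hj Hc. destruct (Hy j c Hj ltac:(lra)) as [d [Hd _]].
    exact (derivable_pt_lim_continuity_pt _ _ _ (derivable_pt_lim_exp_weight L _ _ _ Hd)). }
  destruct (family_attains_min n 0 s (fun j c => exp (- L * c) * y j c)
              ltac:(lia) (proj1 Hs) Hcont) as [m [r [Hm [Hr Hmin]]]].
  apply Rnot_lt_le. intro Hneg.
  assert (Hes := exp_pos (- L * s)). assert (Her := exp_pos (- L * r)).
  assert (Hwr : exp (- L * r) * y m r < 0).
  { specialize (Hmin i s Hi ltac:(lra)). simpl in Hmin. nra. }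
  assert (Hyr : y m r < 0) by nra.
  assert (Hr0 : 0 < r).
  { destruct (Rle_lt_dec r 0) as [Hr0 | Hr0]; [| exact Hr0].
    replace r with 0 in Hyr by lra. specialize (Hy0 m Hm). lra. }
  destruct (Hy m r Hm ltac:(lra)) as [d [Hd Hineq]].
  assert (Hdec : exp (- L * r) * (d - L * y m r) <= 0).
  { apply (derivable_pt_lim_left_min _ 0 r _ Hr0 (derivable_pt_lim_exp_weight L _ _ _ Hd)).
    intros c Hc. apply (Hmin m c Hm). lra. }
  assert (HgK : g m r <= g k rk) by (specialize (Hgmax m r Hm ltac:(lra)); simpl in Hgmax; lra).
  assert (Hlow : g m r * y m r <= d).
  { apply Hineq; [exact Hyr |]. intros j Hj.
    specialize (Hmin j r Hj Hr). simpl in Hmin.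
    apply (Rmult_le_reg_l (exp (- L * r))); auto. }
  assert (HLy : L * y m r < g m r * y m r) by (unfold L; nra).
  nra.
Qed.

Definition cooperative (p : nat) (beta u v : R) : Prop := 0 <= 2 * INR p * u - beta * v.

Definition F2U_rate (p : nat) (beta Lam u v a a' w : R) : R :=
  2 * (1 - INR p) - 2 * INR p * beta * u + 2 * beta * Lam
  + 2 * INR p * (2 * INR p * a' - beta * w)
  + 4 * INR p * INR p * (Rabs (a - a') + Rabs (u - a))
  + 2 * INR p * beta * (Rabs (w - v) + 2 * Rabs (u - a)).

Lemma F2L_eq_F2U p beta Lam u v : F2L p beta Lam u v = F2U p beta (- Lam) u v.
Proof. unfold F2L, F2U. ring. Qed.

Lemma min_mul_Rabs_le_mult m x y :
  m <= 0 -> m <= x -> m <= y -> m * (Rabs x + Rabs y) <= x * y.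
Proof.
  intros Hm Hx Hy.
  unfold Rabs; destruct (Rcase_abs x); destruct (Rcase_abs y); nra.
Qed.

Lemma F1_sub_ge p beta u v a b :
  0 <= beta -> u - a <= v - b -> (beta - INR p) * (u - a) <= F1 p beta u v - F1 p beta a b.
Proof. intros Hb Huv. unfold F1. nra. Qed.

(* Expansion around the reference point (a', w):
   F2U u v - F2U a b = (2(1-p) - 2p beta u + 2 beta Lam)(v-b) + 2p^2 (u-a)^2
     + 2p(2p a' - beta w)(u-a) + 4p^2 (a-a')(u-a) + 2p beta ((w-v) + (v-b))(u-a). *)
Lemma F2U_sub_ge p beta Lam u v a b a' w :
  0 <= beta -> cooperative p beta a' w ->
  v - b <= 0 -> v - b <= u - a -> v - b <= a - a' -> v - b <= w - v ->
  F2U_rate p beta Lam u v a a' w * (v - b) <= F2U p beta Lam u v - F2U p beta Lam a b.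
Proof.
  unfold cooperative. intros Hb Hcoop Hm Hua Haa Hwv.
  assert (HP := pos_INR p). set (P := INR p) in *. set (m := v - b) in *.
  assert (Hid : F2U p beta Lam u v - F2U p beta Lam a b
    = (2 * (1 - P) - 2 * P * beta * u + 2 * beta * Lam) * m + 2 * P * P * (u - a) ^ 2
      + 2 * P * (2 * P * a' - beta * w) * (u - a) + 4 * P * P * ((a - a') * (u - a))
      + 2 * P * beta * ((w - v) * (u - a)) + 2 * P * beta * (m * (u - a))).
  { unfold F2U, m. fold P. ring. }
  assert (Hsq : 0 <= 2 * P * P * (u - a) ^ 2)
    by (apply Rmult_le_pos; [nra | apply pow2_ge_0]).
  assert (Hk : 2 * P * (2 * P * a' - beta * w) * m <= 2 * P * (2 * P * a' - beta * w) * (u - a))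
    by (apply Rmult_le_compat_l; nra).
  assert (H1 : 4 * P * P * (m * (Rabs (a - a') + Rabs (u - a))) <= 4 * P * P * ((a - a') * (u - a)))
    by (apply Rmult_le_compat_l; [nra | apply min_mul_Rabs_le_mult; lra]).
  assert (H2 : 2 * P * beta * (m * (Rabs (w - v) + Rabs (u - a)))
               <= 2 * P * beta * ((w - v) * (u - a)))
    by (apply Rmult_le_compat_l; [nra | apply min_mul_Rabs_le_mult; lra]).
  assert (H3 : 2 * P * beta * (m * Rabs (u - a)) <= 2 * P * beta * (m * (u - a)))
    by (apply Rmult_le_compat_l; [nra | apply Rmult_le_compat_neg_l; [lra | apply Rle_abs]]).
  unfold F2U_rate. fold P. lra.
Qed.

Lemma continuity_pt_F2U_rate p beta Lam (u v a a' w : R -> R) s :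
  continuity_pt u s -> continuity_pt v s -> continuity_pt a s ->
  continuity_pt a' s -> continuity_pt w s ->
  continuity_pt (fun s => F2U_rate p beta Lam (u s) (v s) (a s) (a' s) (w s)) s.
Proof.
  intros Hu Hv Ha Ha' Hw.
  assert (Habs : forall f, continuity_pt f s -> continuity_pt (fun s => Rabs (f s)) s).
  { intros f Hf. exact (continuity_pt_comp f Rabs s Hf (Rcontinuity_abs _)). }
  assert (Hc : forall c : R, continuity_pt (fun _ => c) s).
  { intro c. apply continuity_pt_const. intros x y. reflexivity. }
  unfold F2U_rate.
  repeat first
    [ apply (continuity_pt_plus (fun s => _) (fun s => _))
    | apply (continuity_pt_minus (fun s => _) (fun s => _))
    | apply (continuity_pt_opp (fun s => _))
    | apply (continuity_pt_mult (fun s => _) (fun s => _))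
    | apply Habs
    | apply Hc
    | assumption ].
Qed.

Definition differential_ineq (rel : R -> R -> Prop) (p : nat) (beta Lam t : R)
    (Y1 Y2 : R -> R) : Prop :=
  forall s, 0 <= s <= t -> exists d1 d2,
    derivable_pt_lim Y1 s d1 /\ derivable_pt_lim Y2 s d2 /\
    rel d1 (F1 p beta (Y1 s) (Y2 s)) /\ rel d2 (F2U p beta Lam (Y1 s) (Y2 s)).

Notation subsolution := (differential_ineq Rle).
Notation supersolution := (differential_ineq Rge).

Lemma differential_ineq_restrict rel p beta Lam t t' Y1 Y2 :
  t <= t' -> differential_ineq rel p beta Lam t' Y1 Y2 -> differential_ineq rel p beta Lam t Y1 Y2.
Proof. intros Htt' HY s Hs. apply HY. lra. Qed.

Lemma differential_ineq_continuity rel p beta Lam t Y1 Y2 s :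
  differential_ineq rel p beta Lam t Y1 Y2 -> 0 <= s <= t ->
  continuity_pt Y1 s /\ continuity_pt Y2 s.
Proof.
  intros HY Hs. destruct (HY s Hs) as [d1 [d2 [D1 [D2 _]]]].
  split; eapply derivable_pt_lim_continuity_pt; eassumption.
Qed.

Lemma comparison_cooperative p beta Lam t (Z1 Z2 Y1 Y2 : R -> R) :
  0 <= beta -> subsolution p beta Lam t Z1 Z2 -> supersolution p beta Lam t Y1 Y2 ->
  Z1 0 <= Y1 0 -> Z2 0 <= Y2 0 ->
  (forall s, 0 <= s <= t -> cooperative p beta (Z1 s) (Z2 s)) ->
  forall s, 0 <= s <= t -> Z1 s <= Y1 s /\ Z2 s <= Y2 s.
Proof.
  intros Hb HZ HY H01 H02 Hcoop.
  set (y i := match i with 0%nat => fun s => Y1 s - Z1 s | _ => fun s => Y2 s - Z2 s end).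
  set (g i := match i with
              | 0%nat => fun _ => beta - INR p
              | _ => fun s => F2U_rate p beta Lam (Y1 s) (Y2 s) (Z1 s) (Z1 s) (Z2 s) end).
  assert (Hy : forall i s, (i < 2)%nat -> 0 <= s <= t -> 0 <= y i s).
  { apply comparison_principle with g.
    - intros i s Hi Hs.
      destruct (differential_ineq_continuity _ _ _ _ _ _ _ s HZ Hs) as [CZ1 CZ2].
      destruct (differential_ineq_continuity _ _ _ _ _ _ _ s HY Hs) as [CY1 CY2].
      destruct i as [|i]; unfold g.
      + apply continuity_pt_const. intros u v. reflexivity.
      + apply continuity_pt_F2U_rate; assumption.
    - intros i Hi. destruct i as [|i]; unfold y; lra.
    - intros i s Hi Hs.
      destruct (HZ s Hs) as [dz1 [dz2 [Dz1 [Dz2 [Iz1 Iz2]]]]].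
      destruct (HY s Hs) as [dy1 [dy2 [Dy1 [Dy2 [Iy1 Iy2]]]]].
      destruct i as [|[|i]]; [exists (dy1 - dz1) | exists (dy2 - dz2) | lia];
        (split; [apply derivable_pt_lim_minus; assumption |]);
        intros Hneg Hmin; specialize (Hmin 0%nat ltac:(lia)) as Hmin0;
        specialize (Hmin 1%nat ltac:(lia)) as Hmin1; unfold y, g in *.
      + assert (HF := F1_sub_ge p beta (Y1 s) (Y2 s) (Z1 s) (Z2 s) Hb Hmin1). lra.
      + assert (HF := F2U_sub_ge p beta Lam (Y1 s) (Y2 s) (Z1 s) (Z2 s) (Z1 s) (Z2 s)
                        Hb (Hcoop s Hs) ltac:(lra) Hmin0 ltac:(lra) ltac:(lra)).
        lra. }
  intros s Hs.
  assert (H1 := Hy 0%nat s ltac:(lia) Hs). assert (H2 := Hy 1%nat s ltac:(lia) Hs).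
  unfold y in H1, H2. lra.
Qed.

Lemma sandwich_cooperative p beta lam mu t (Z1 Z2 X1 X2 W1 W2 : R -> R) :
  0 <= beta ->
  subsolution p beta lam t Z1 Z2 -> supersolution p beta lam t X1 X2 ->
  subsolution p beta mu t X1 X2 -> supersolution p beta mu t W1 W2 ->
  Z1 0 <= X1 0 -> Z2 0 <= X2 0 -> X1 0 <= W1 0 -> X2 0 <= W2 0 ->
  (forall s, 0 <= s <= t -> cooperative p beta (Z1 s) (W2 s)) ->
  forall s, 0 <= s <= t ->
    (Z1 s <= X1 s /\ Z2 s <= X2 s) /\ (X1 s <= W1 s /\ X2 s <= W2 s).
Proof.
  intros Hb HZ HXl HXm HW H01 H02 H03 H04 Hcoop.
  set (y i := match i with
              | 0%nat => fun s => X1 s - Z1 s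
              | 1%nat => fun s => X2 s - Z2 s
              | 2%nat => fun s => W1 s - X1 s
              | _ => fun s => W2 s - X2 s end).
  set (g i := match i with
              | 1%nat => fun s => F2U_rate p beta lam (X1 s) (X2 s) (Z1 s) (Z1 s) (W2 s)
              | 3%nat => fun s => F2U_rate p beta mu (W1 s) (W2 s) (X1 s) (Z1 s) (W2 s)
              | _ => fun _ => beta - INR p end).
  assert (Hy : forall i s, (i < 4)%nat -> 0 <= s <= t -> 0 <= y i s).
  { apply comparison_principle with g.
    - intros i s Hi Hs.
      destruct (differential_ineq_continuity _ _ _ _ _ _ _ s HZ Hs) as [CZ1 CZ2].
      destruct (differential_ineq_continuity _ _ _ _ _ _ _ s HXl Hs) as [CX1 CX2].
      destruct (differential_ineq_continuity _ _ _ _ _ _ _ s HW Hs) as [CW1 CW2].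
      destruct i as [|[|[|[|i]]]]; unfold g;
        solve [ apply continuity_pt_F2U_rate; assumption
              | apply continuity_pt_const; intros u v; reflexivity ].
    - intros i Hi. destruct i as [|[|[|[|i]]]]; unfold y; lra.
    - intros i s Hi Hs.
      destruct (HZ s Hs) as [dz1 [dz2 [Dz1 [Dz2 [Iz1 Iz2]]]]].
      destruct (HXl s Hs) as [dx1 [dx2 [Dx1 [Dx2 [Ixl1 Ixl2]]]]].
      destruct (HXm s Hs) as [dx1' [dx2' [Dx1' [Dx2' [Ixm1 Ixm2]]]]].
      rewrite (uniqueness_limite _ _ _ _ Dx1' Dx1) in Ixm1.
      rewrite (uniqueness_limite _ _ _ _ Dx2' Dx2) in Ixm2.
      destruct (HW s Hs) as [dw1 [dw2 [Dw1 [Dw2 [Iw1 Iw2]]]]].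
      destruct i as [|[|[|[|i]]]];
        [exists (dx1 - dz1) | exists (dx2 - dz2) | exists (dw1 - dx1) | exists (dw2 - dx2) | lia];
        (split; [apply derivable_pt_lim_minus; assumption |]);
        intros Hneg Hmin;
        specialize (Hmin 0%nat ltac:(lia)) as Hmin0; specialize (Hmin 1%nat ltac:(lia)) as Hmin1;
        specialize (Hmin 2%nat ltac:(lia)) as Hmin2; specialize (Hmin 3%nat ltac:(lia)) as Hmin3;
        unfold y, g in *.
      + assert (HF := F1_sub_ge p beta (X1 s) (X2 s) (Z1 s) (Z2 s) Hb Hmin1). lra.
      + assert (HF := F2U_sub_ge p beta lam (X1 s) (X2 s) (Z1 s) (Z2 s) (Z1 s) (W2 s)
                        Hb (Hcoop s Hs) ltac:(lra) Hmin0 ltac:(lra) Hmin3).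
        lra.
      + assert (HF := F1_sub_ge p beta (W1 s) (W2 s) (X1 s) (X2 s) Hb Hmin3). lra.
      + assert (HF := F2U_sub_ge p beta mu (W1 s) (W2 s) (X1 s) (X2 s) (Z1 s) (W2 s)
                        Hb (Hcoop s Hs) ltac:(lra) Hmin2 Hmin0 ltac:(lra)).
        lra. }
  intros s Hs.
  assert (H1 := Hy 0%nat s ltac:(lia) Hs). assert (H2 := Hy 1%nat s ltac:(lia) Hs).
  assert (H3 := Hy 2%nat s ltac:(lia) Hs). assert (H4 := Hy 3%nat s ltac:(lia) Hs).
  unfold y in H1, H2, H3, H4. lra.
Qed.

Lemma Vminus_cooperative p beta u v : 0 < beta -> Vminus p beta u v -> cooperative p beta u v.
Proof.
  intros Hb [_ [_ Hv]]. unfold cooperative.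
  apply (Rmult_le_compat_l beta) in Hv; [| lra].
  replace (beta * (2 * INR p * u / beta)) with (2 * INR p * u) in Hv by (field; lra).
  lra.
Qed.

Lemma cooperative_until_exit p beta (Y1 Y2 : R -> R) D t :
  0 < beta -> t <= D -> continuity_pt Y1 t -> continuity_pt Y2 t ->
  Vminus p beta (Y1 0) (Y2 0) -> le_hit Y1 Y2 D (Vminus_c p beta) t ->
  forall s, 0 <= s <= t -> cooperative p beta (Y1 s) (Y2 s).
Proof.
  intros Hb HtD C1 C2 H0 Hhit.
  assert (Hbefore : forall s, 0 <= s < t -> cooperative p beta (Y1 s) (Y2 s)).
  { intros s Hs. apply Vminus_cooperative; [exact Hb |].
    apply NNPP. intro Hout. specialize (Hhit s ltac:(lra) Hout). lra. }
  intros s Hs. destruct (Rlt_le_dec s t) as [Hst | Hts]; [apply Hbefore; lra |].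
  replace s with t by lra.
  destruct (Rle_lt_dec t 0) as [Ht0 | Ht0].
  - replace t with 0 by lra. apply Vminus_cooperative; assumption.
  - apply (continuity_pt_ge0_left (fun s => 2 * INR p * Y1 s - beta * Y2 s) 0 t Ht0).
    + apply continuity_pt_minus; apply continuity_pt_scal; assumption.
    + exact Hbefore.
Qed.

Lemma comparison_until_exit p beta Lam D D' t (Z1 Z2 Y1 Y2 : R -> R) :
  0 < beta -> 0 <= t -> t <= D -> t <= D' ->
  subsolution p beta Lam D Z1 Z2 -> supersolution p beta Lam D' Y1 Y2 ->
  Z1 0 <= Y1 0 -> Z2 0 <= Y2 0 -> Vminus p beta (Z1 0) (Z2 0) ->
  le_hit Z1 Z2 D (Vminus_c p beta) t ->
  Z1 t <= Y1 t /\ Z2 t <= Y2 t.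
Proof.
  intros Hb Ht HtD HtD' HZ HY H01 H02 HV0 Hhit.
  destruct (differential_ineq_continuity _ _ _ _ _ _ _ t HZ ltac:(lra)) as [C1 C2].
  apply (comparison_cooperative p beta Lam t); try lra;
    try (eapply differential_ineq_restrict; [| eassumption]; lra).
  exact (cooperative_until_exit _ _ _ _ D t Hb HtD C1 C2 HV0 Hhit).
Qed.

Lemma sandwich_until_exit p beta lam mu DZ DX DW t (Z1 Z2 X1 X2 W1 W2 : R -> R) :
  0 < beta -> 0 <= t -> t <= DZ -> t <= DX -> t <= DW ->
  subsolution p beta lam DZ Z1 Z2 -> supersolution p beta lam DX X1 X2 ->
  subsolution p beta mu DX X1 X2 -> supersolution p beta mu DW W1 W2 ->
  Z1 0 <= X1 0 -> Z2 0 <= X2 0 -> X1 0 <= W1 0 -> X2 0 <= W2 0 ->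
  Vminus p beta (Z1 0) (W2 0) ->
  le_hit Z1 W2 (Rmin DZ DW) (Vminus_c p beta) t ->
  (Z1 t <= X1 t /\ Z2 t <= X2 t) /\ (X1 t <= W1 t /\ X2 t <= W2 t).
Proof.
  intros Hb Ht HtZ HtX HtW HZ HXl HXm HW H01 H02 H03 H04 HV0 Hhit.
  destruct (differential_ineq_continuity _ _ _ _ _ _ _ t HZ ltac:(lra)) as [C1 _].
  destruct (differential_ineq_continuity _ _ _ _ _ _ _ t HW ltac:(lra)) as [_ C2].
  apply (sandwich_cooperative p beta lam mu t); try lra;
    try (eapply differential_ineq_restrict; [| eassumption]; lra).
  apply (cooperative_until_exit _ _ _ _ (Rmin DZ DW) t Hb); auto.
  apply Rmin_glb; lra.
Qed.

Theorem mainTheorem18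
  (p : nat) (beta Lam T TL TU : R)
  (X1 X2 dX1 dX2 AL1 AL2 AU1 AU2 : R -> R)
  (Hp : (3 <= p)%nat) (Hbeta : 0 < beta) (HLam : 0 < Lam) (HT : 0 <= T)
  (HdX1 : forall t, 0 <= t <= T -> derivable_pt_lim X1 t (dX1 t))
  (HdX2 : forall t, 0 <= t <= T -> derivable_pt_lim X2 t (dX2 t))
  (HcX1 : forall t, 0 <= t <= T -> continuity_pt dX1 t)
  (HcX2 : forall t, 0 <= t <= T -> continuity_pt dX2 t)
  (HI1 : forall t, 0 <= t <= T -> dX1 t = F1 p beta (X1 t) (X2 t))
  (HIL : forall t, 0 <= t <= T -> F2L p beta Lam (X1 t) (X2 t) <= dX2 t)
  (HIU : forall t, 0 <= t <= T -> dX2 t <= F2U p beta Lam (X1 t) (X2 t))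
  (H0 : Vminus_int p beta (X1 0) (X2 0))
  (HAL1 : forall t, 0 <= t <= TL -> derivable_pt_lim AL1 t (F1 p beta (AL1 t) (AL2 t)))
  (HAL2 : forall t, 0 <= t <= TL -> derivable_pt_lim AL2 t (F2L p beta Lam (AL1 t) (AL2 t)))
  (HAL0 : AL1 0 = X1 0 /\ AL2 0 = X2 0)
  (HAU1 : forall t, 0 <= t <= TU -> derivable_pt_lim AU1 t (F1 p beta (AU1 t) (AU2 t)))
  (HAU2 : forall t, 0 <= t <= TU -> derivable_pt_lim AU2 t (F2U p beta Lam (AU1 t) (AU2 t)))
  (HAU0 : AU1 0 = X1 0 /\ AU2 0 = X2 0) :
  (forall t, 0 <= t <= T -> t <= TL ->
     le_hit AL1 AL2 TL (Vminus_c p beta) t ->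
     le_hit X1 X2 T (Vminus_c p beta) t ->
     AL1 t <= X1 t /\ AL2 t <= X2 t)
  /\
  (forall t, 0 <= t <= T -> t <= TU ->
     le_hit AU1 AU2 TU (Vminus_c p beta) t ->
     le_hit X1 X2 T (Vminus_c p beta) t ->
     X1 t <= AU1 t /\ X2 t <= AU2 t)
  /\
  (forall t, 0 <= t <= T -> t <= TL -> t <= TU ->
     le_hit AL1 AU2 (Rmin TL TU) (Vminus_c p beta) t ->
     (AL1 t <= X1 t /\ AL2 t <= X2 t) /\ (X1 t <= AU1 t /\ X2 t <= AU2 t))
  /\
  (T <= TL -> T <= TU ->
     (forall s, 0 <= s <= Rmin TL TU -> ~ Vminus_c p beta (AL1 s) (AU2 s)) ->
     forall t, 0 <= t <= T ->
       (AL1 t <= X1 t /\ AL2 t <= X2 t) /\ (X1 t <= AU1 t /\ X2 t <= AU2 t)).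
Proof.
  destruct HAL0 as [EL1 EL2], HAU0 as [EU1 EU2].
  assert (HX0 : Vminus p beta (X1 0) (X2 0)) by (destruct H0 as (? & ? & ?); red; lra).
  assert (Xsup : supersolution p beta (- Lam) T X1 X2).
  { intros s Hs. exists (dX1 s), (dX2 s). rewrite <- F2L_eq_F2U, <- (HI1 s Hs).
    repeat split; auto using Rge_refl, Rle_ge. }
  assert (Xsub : subsolution p beta Lam T X1 X2).
  { intros s Hs. exists (dX1 s), (dX2 s). rewrite <- (HI1 s Hs).
    repeat split; auto using Rle_refl. }
  assert (ALsub : subsolution p beta (- Lam) TL AL1 AL2).
  { intros s Hs. rewrite <- F2L_eq_F2U. do 2 eexists. repeat split; eauto using Rle_refl. }
  assert (AUsup : supersolution p beta Lam TU AU1 AU2).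
  { intros s Hs. do 2 eexists. repeat split; eauto using Rge_refl. }
  assert (Hsandwich : forall t, 0 <= t <= T -> t <= TL -> t <= TU ->
            le_hit AL1 AU2 (Rmin TL TU) (Vminus_c p beta) t ->
            (AL1 t <= X1 t /\ AL2 t <= X2 t) /\ (X1 t <= AU1 t /\ X2 t <= AU2 t)).
  { intros t Ht HtL HtU.
    apply (sandwich_until_exit p beta (- Lam) Lam TL T TU); auto; try lra.
    rewrite EL1, EU2. exact HX0. }
  split; [| split; [| split]].
  - intros t Ht HtL Hhit _.
    apply (comparison_until_exit p beta (- Lam) TL T); auto; try lra.
    rewrite EL1, EL2. exact HX0.
  - intros t Ht HtU _ Hhit.
    apply (comparison_until_exit p beta Lam T TU); auto; lra.
  - exact Hsandwich.
  - intros HTL HTU Hinside t Ht. apply Hsandwich; try lra.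
    intros s Hs Hout. destruct (Hinside s Hs Hout).
Qed.
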